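(* Let $G$ be a compact Hausdorff topological group and let $X$ be a Hausdorff topological group on which $G$ acts (continuously) by topological group homomorphisms, such that $X$ is $G$-connected. Then $\mathbf{TC}_G(X)=\mathrm{cat}_G(X)$.
   Context: $X$ is $G$-connected if $X^H=\{x: hx=x\ \forall h\in H\}$ is path-connected for every closed subgroup $H\le G$. A $G$-homotopy is an equivariant homotopy with trivial action on $I$. An invariant set is $G$-categorical if its inclusion is $G$-homotopic to a map into a single orbit; $\mathrm{cat}_G(X)$ is the least number of open $G$-categorical sets covering $X$. $\mathbf{TC}_G(X)$ is the least $k$ such that $X\times X$ (diagonal action) is covered by $k$ $G$-invariant open sets $U_i$ each admitting a $G$-map $s\colon U_i\to X^I$ with $\pi s$ $G$-homotopic to the inclusion ($\infty$ if none); $X^I$ is the path space (compact-open topology, action $(g\gamma)(t)=g\gamma(t)$), $\pi(\gamma)=(\gamma(0),\gamma(1))$. *)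

From HB Require Import structures.
From mathcomp Require Import all_boot all_order all_algebra.
From mathcomp Require Import all_classical all_reals all_analysis.
From mathcomp Require Import Rstruct Rstruct_topology.
Set Implicit Arguments. Unset Strict Implicit. Unset Printing Implicit Defensive.
Import Order.TTheory GRing.Theory Num.Theory.
Local Open Scope classical_set_scope.
Local Open Scope ring_scope.

Definition unit_interval : set Rdefinitions.R := `[0%R, 1%R]%classic.
Notation I01 := (set_type unit_interval).

Lemma I01_zero_mem : (0%R : Rdefinitions.R) \in unit_interval.
Proof. by apply/mem_set; rewrite /unit_interval /= in_itv /= lexx ler01. Qed.
Lemma I01_one_mem : (1%R : Rdefinitions.R) \in unit_interval.
Proof. by apply/mem_set; rewrite /unit_interval /= in_itv /= lexx ler01. Qed.

Definition I0 : I01 := exist _ 0%R I01_zero_mem.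
Definition I1 : I01 := exist _ 1%R I01_one_mem.

(** The path space X^I: maps I -> X with the compact-open topology
    (only continuous maps are used as paths). *)
Definition path_space (X : topologicalType) := {compact-open, I01 -> X}.

Definition is_group {G : Type} (mul : G -> G -> G) (inv : G -> G) (one : G) : Prop :=
  [/\ forall x y z, mul x (mul y z) = mul (mul x y) z,
      forall x, mul one x = x, forall x, mul x one = x,
      forall x, mul (inv x) x = one & forall x, mul x (inv x) = one].

Definition is_topological_group {G : topologicalType}
  (mul : G -> G -> G) (inv : G -> G) (one : G) : Prop :=
  [/\ is_group mul inv one,
      continuous (fun p : G * G => mul p.1 p.2) & continuous inv].

Definition is_continuous_action {G X : topologicalType}
  (mulG : G -> G -> G) (oneG : G) (act : G -> X -> X) : Prop :=
  [/\ forall x, act oneG x = x,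
      forall g h x, act (mulG g h) x = act g (act h x) &
      continuous (fun p : G * X => act p.1 p.2)].

Definition acts_by_homomorphisms {G X : Type} (mulX : X -> X -> X)
  (act : G -> X -> X) : Prop :=
  forall g x y, act g (mulX x y) = mulX (act g x) (act g y).

Definition closed_subgroup {G : topologicalType}
  (mul : G -> G -> G) (inv : G -> G) (one : G) (H : set G) : Prop :=
  [/\ closed H, H one, forall x y, H x -> H y -> H (mul x y)
    & forall x, H x -> H (inv x)].

Definition fixed_set {G X : Type} (act : G -> X -> X) (H : set G) : set X :=
  [set x | forall h, H h -> act h x = x].

Definition path_connected {X : topologicalType} (A : set X) : Prop :=
  forall x y, A x -> A y ->
    exists gamma : I01 -> X, [/\ continuous gamma, gamma I0 = x, gamma I1 = y
                               & forall t, A (gamma t)].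

Definition G_connected {G X : topologicalType}
  (mulG : G -> G -> G) (invG : G -> G) (oneG : G) (act : G -> X -> X) : Prop :=
  forall H : set G, closed_subgroup mulG invG oneG H -> path_connected (fixed_set act H).

Definition invariant {G X : Type} (act : G -> X -> X) (U : set X) : Prop :=
  forall g x, U x -> U (act g x).

Definition orbit {G X : Type} (act : G -> X -> X) (x0 : X) : set X :=
  [set act g x0 | g in [set: G]].

Definition diag_act {G X : Type} (act : G -> X -> X) (g : G) (u : X * X) : X * X :=
  (act g u.1, act g u.2).

(** U is G-categorical: the inclusion U -> X is G-homotopic (trivial action
    on I) to a G-map with values in a single orbit. *)
Definition G_categorical {G X : topologicalType} (act : G -> X -> X) (U : set X) : Prop :=
  invariant act U /\
  exists (x0 : X) (H : X * I01 -> X),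
    [/\ {within U `*` [set: I01], continuous H},
        forall g x t, U x -> H (act g x, t) = act g (H (x, t)),
        forall x, U x -> H (x, I0) = x
      & forall x, U x -> orbit act x0 (H (x, I1))].

Definition cat_cover {G X : topologicalType} (act : G -> X -> X) (k : nat) : Prop :=
  exists U : 'I_k -> set X,
    [/\ forall i, open (U i), forall i, G_categorical act (U i)
      & \bigcup_i U i = [set: X]].

(** U subset X x X admits an equivariant motion planner s : U -> X^I with
    pi o s G-homotopic to the inclusion. *)
Definition G_motion_planner {G X : topologicalType} (act : G -> X -> X)
  (U : set (X * X)) : Prop :=
  exists (s : X * X -> path_space X) (H : (X * X) * I01 -> X * X),
    [/\ forall u, U u -> continuous (s u : I01 -> X),
        {within U, continuous s},
        forall g u, U u -> s (diag_act act g u) = (fun t => act g (s u t)) :> (I01 -> X)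
      & [/\ {within U `*` [set: I01], continuous H},
        forall g u t, U u -> H (diag_act act g u, t) = diag_act act g (H (u, t)),
        forall u, U u -> H (u, I0) = (s u I0, s u I1)
      & forall u, U u -> H (u, I1) = u]].

Definition TC_cover {G X : topologicalType} (act : G -> X -> X) (k : nat) : Prop :=
  exists U : 'I_k -> set (X * X),
    [/\ forall i, open (U i), forall i, invariant (diag_act act) (U i),
        forall i, G_motion_planner act (U i)
      & \bigcup_i U i = [set: X * X]].

(** Least natural number satisfying P, or None (= infinity) if there is none. *)
Definition least_nat (P : nat -> Prop) : option nat :=
  match pselect (exists n, P n) with
  | left h =>
      Some (@ex_minn (fun n => `[< P n >])
              (let: ex_intro n hn := h in ex_intro _ n (asboolT hn)))
  | right _ => None
  end.

Definition catG {G X : topologicalType} (act : G -> X -> X) : option nat :=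
  least_nat (cat_cover act).

Definition TCG {G X : topologicalType} (act : G -> X -> X) : option nat :=
  least_nat (TC_cover act).

From Pilot Require Import Defs.
From HB Require Import structures.
From mathcomp Require Import all_boot all_order all_algebra.
From mathcomp Require Import all_classical all_reals all_analysis.
From mathcomp Require Import Rstruct Rstruct_topology.
From mathcomp Require Import lra.
Set Implicit Arguments. Unset Strict Implicit. Unset Printing Implicit Defensive.
Import Order.TTheory GRing.Theory Num.Theory.
Local Open Scope classical_set_scope.
Local Open Scope ring_scope.

(* A G-categorical open set V contracts equivariantly onto the identity of X:
   G-connectedness provides a path from a point x0 of the target orbit to the
   identity inside the fixed set of the stabiliser of x0; translating it along
   the orbit is well defined, and continuous because G is compact and X is
   Hausdorff.  With such a contraction Q, the set of pairs (x, y) with x⁻¹y in V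
   deforms equivariantly onto the diagonal through (x, x Q(x⁻¹y, t)), so a cat
   cover yields a TC cover of the same size.  Conversely the slice {x | (1, x)
   in U} of a set U with an equivariant motion planner s contracts to 1 by a
   formula combining the deformation of U with s. *)

Section group_laws.
Variables (T : Type) (mul : T -> T -> T) (inv : T -> T) (one : T).
Hypothesis grT : is_group mul inv one.

Lemma group_mulKVg x y : mul x (mul (inv x) y) = y.
Proof. by case: grT => mulA mul1g _ _ mulgV; rewrite mulA mulgV mul1g. Qed.

Lemma group_mulgKV x y : mul (mul y (inv x)) x = y.
Proof. by case: grT => mulA _ mulg1 mulVg _; rewrite -mulA mulVg mulg1. Qed.

Lemma group_mulgK x y : mul (mul y x) (inv x) = y.
Proof. by case: grT => mulA _ mulg1 _ mulgV; rewrite -mulA mulgV mulg1. Qed.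

Lemma group_invg_unique x y : mul x y = one -> x = inv y.
Proof.
case: grT => mulA mul1g mulg1 _ mulgV xy.
by rewrite -[x]mulg1 -(mulgV y) mulA xy mul1g.
Qed.

Lemma group_invg1 : inv one = one.
Proof. by case: grT => _ _ mulg1 mulVg _; rewrite -[inv one]mulg1 mulVg. Qed.

End group_laws.

Section action_by_homomorphisms.
Variables (G X : Type) (mulX : X -> X -> X) (invX : X -> X) (oneX : X).
Variable act : G -> X -> X.
Hypotheses (grX : is_group mulX invX oneX) (hom : acts_by_homomorphisms mulX act).

Lemma act_one g : act g oneX = oneX.
Proof.
have idem : mulX (act g oneX) (act g oneX) = act g oneX.
  by case: grX => _ mul1g _ _ _; rewrite -hom mul1g.
by rewrite -[LHS](group_mulgK grX (act g oneX)) idem; case: grX => _ _ _ _ ->.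
Qed.

Lemma act_inv g x : act g (invX x) = invX (act g x).
Proof.
apply: (group_invg_unique grX); rewrite -hom.
by case: grX => _ _ _ -> _; rewrite act_one.
Qed.

End action_by_homomorphisms.

Lemma I01_rev_mem (t : I01) : 1 - set_val t \in unit_interval.
Proof.
case: t => x xI /=; have := set_mem xI.
rewrite /unit_interval /= in_itv /= => /andP[x0 x1].
by apply/mem_set; rewrite /= in_itv /= set_valE /=; apply/andP; split; lra.
Qed.

Definition I01_rev (t : I01) : I01 :=
  @exist _ (fun x => x \in unit_interval) _ (I01_rev_mem t).

Lemma I01_rev_continuous : continuous I01_rev.
Proof.
apply: continuous_comp_initial.
have -> : set_val \o I01_rev = (fun x : Rdefinitions.R^o => 1 - x) \o set_val by [].
move=> t; apply: continuous_comp; first exact: initial_continuous.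
have : {for (set_val t : Rdefinitions.R^o),
    continuous (fun x : Rdefinitions.R^o => 1 - x)}.
  by apply: continuousB; [exact: cvg_cst | exact: cvg_id].
by [].
Qed.

Lemma I01_rev0 : I01_rev I0 = I1.
Proof. by apply: val_inj => /=; rewrite subr0. Qed.

Lemma I01_rev1 : I01_rev I1 = I0.
Proof. by apply: val_inj => /=; rewrite subrr. Qed.

Lemma I01_clamp_mem (x : Rdefinitions.R) :
  Num.min (Num.max x 0) 1 \in unit_interval.
Proof.
apply/mem_set; rewrite /unit_interval /= in_itv /= le_min ler01 le_max lexx orbT /=.
by rewrite ge_min lexx orbT.
Qed.

Definition I01_clamp (x : Rdefinitions.R) : I01 :=
  @exist _ (fun x => x \in unit_interval) _ (I01_clamp_mem x).

Lemma I01_clamp_continuous : continuous I01_clamp.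
Proof.
apply: continuous_comp_initial => x /=.
have : {for (x : Rdefinitions.R^o), continuous
    ((id \max (fun _ : Rdefinitions.R^o => 0)) \min (fun _ => 1))}.
  apply: continuous_min; last exact: cvg_cst.
  by apply: continuous_max; [exact: cvg_id | exact: cvg_cst].
by [].
Qed.

Lemma I01_compact : compact [set: I01].
Proof.
have -> : [set: I01] = I01_clamp @` `[0, 1].
  apply/seteqP; split => // -[x xI] _.
  have /andP[x0 x1] : (0 <= x) && (x <= 1).
    by have := set_mem xI; rewrite /unit_interval /= in_itv.
  exists x; first by rewrite /= in_itv /= x0 x1.
  by apply: val_inj => /=; rewrite (max_idPl x0) (min_idPl x1).
apply: continuous_compact; last exact: segment_compact.
exact: continuous_subspaceT I01_clamp_continuous.
Qed.

Lemma open_setXT {A B : topologicalType} (U : set A) :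
  open U -> open (U `*` [set: B]).
Proof. by rewrite setXT; apply: open_comp => p _; exact: cvg_fst. Qed.

Lemma continuous_pair_at {A B C : topologicalType} (f : A -> B) (g : A -> C) a :
  {for a, continuous f} -> {for a, continuous g} ->
  {for a, continuous (fun z => (f z, g z))}.
Proof. by move=> cf cg; apply: cvg_pair. Qed.

Lemma continuous2_at {A B C D : topologicalType} (op : B -> C -> D)
    (f : A -> B) (g : A -> C) a :
  continuous (fun q : B * C => op q.1 q.2) ->
  {for a, continuous f} -> {for a, continuous g} ->
  {for a, continuous (fun z => op (f z) (g z))}.
Proof.
move=> cop cf cg.
exact: (continuous_comp (continuous_pair_at cf cg) (cop _)).
Qed.

Lemma cst_path_continuous (X : topologicalType) :
  continuous (fun x : X => (cst x : path_space X)).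
Proof.
have cfst : continuous (@fst X I01) by move=> p; exact: cvg_fst.
by have [] := continuous_curry cfst.
Qed.

Lemma compact_open_eval_continuous_at {A T X : topologicalType}
    (f : A -> {compact-open, T -> X}) (a : A) (t : T) :
  compact [set: T] -> regular_space T ->
  {for a, continuous f} -> continuous (f a : T -> X) ->
  {for (a, t), continuous (fun p : A * T => (f p.1 : T -> X) p.2)}.
Proof.
move=> cT rT fa cfa D; rewrite nbhsE => -[N [oN Nfat]] /filterS; apply.
have [R Rt RO] : exists2 R, nbhs t R & forall z, closure R z -> N ((f a : T -> X) z).
  have [] := rT t ((f a : T -> X) @^-1` N); first exact/cfa/open_nbhs_nbhs.
  by move=> R ? ?; exists R.
have cR : compact (closure R).
  by apply: (subclosed_compact _ cT) => //; exact: closed_closure.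
exists (f @^-1` [set g | (g : T -> X) @` closure R `<=` N], closure R).
  split; last by apply: filterS Rt; exact: subset_closure.
  apply: fa; apply: open_nbhs_nbhs; split; first exact: compact_open_open.
  by move=> _ [z Rz <-]; apply: RO.
by case=> a' r /= [fK Rr]; apply: fK; exists r.
Qed.

(* The section c need not be continuous: since G is compact and Z Hausdorff,
   Phi, being constant on the fibres of a, descends continuously along a. *)
Lemma compact_descend_continuous_at {G Y T X Z : topologicalType}
    (a : G -> Z) (Phi : G * T -> X) (f : Y -> Z) (c : Y -> G) (y : Y) (t : T) :
  compact [set: G] -> hausdorff_space Z -> continuous a -> continuous Phi ->
  {for y, continuous f} -> (\forall y' \near y, a (c y') = f y') ->
  (forall g, a g = f y -> Phi (g, t) = Phi (c y, t)) ->
  {for (y, t), continuous (fun p : Y * T => Phi (c p.1, p.2))}.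
Proof.
move=> cG hZ ca cPhi cf near_c fibre W /= WPhi.
have cover : \forall p \near (y, t),
    [set: G] `<=` (fun g => a g = f p.1 -> W (Phi (g, p.2))).
  move/compact_near_coveringP: cG => /(_ (Y * T)%type (nbhs (y, t))
    (fun p g => a g = f p.1 -> W (Phi (g, p.2)))); apply => g _.
  have [agfy|nagfy] := pselect (a g = f y).
    have [[A B] /= [Ag Bt] ABW] : nbhs (g, t) (Phi @^-1` W).
      by apply: cPhi; rewrite /= fibre.
    exists (A, [set p : Y * T | B p.2]).
      split => //; exists (setT, B) => //; first by split => //; exact: filterT.
      by case=> ? ? [].
    by move=> [g' p] /= [Ag' Bp] _; apply: (ABW (g', p.2)).
  have : ~ cluster (nbhs (a g)) (f y) by move=> /hZ.
  rewrite /cluster => /existsNP[A /existsNP[B /not_implyP[nA /not_implyP[nB AB]]]].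
  exists (a @^-1` A, [set p : Y * T | B (f p.1)]).
    split; first exact: ca.
    exists (f @^-1` B, setT) => //.
      by split => //; [exact: cf | exact: filterT].
    by case=> ? ? [].
  move=> [g' p] /= [Ag' Bp] e; exfalso; apply: AB; exists (a g'); split => //.
  by rewrite e.
have nc : \forall p \near (y, t), a (c p.1) = f p.1.
  exists ([set y' | a (c y') = f y'], setT) => //.
    by split => //; exact: filterT.
  by case=> ? ? [].
suff : \forall p \near (y, t), W (Phi (c p.1, p.2)) by [].
near=> p; apply: (near cover p) => //; exact: (near nc p).
Unshelve. all: by end_near.
Qed.

Section equivariant_category.
Variables (G X : topologicalType).
Variables (mulG : G -> G -> G) (invG : G -> G) (oneG : G).
Variables (mulX : X -> X -> X) (invX : X -> X) (oneX : X).
Variable act : G -> X -> X.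
Hypotheses (grG : is_group mulG invG oneG) (cG : compact [set: G]).
Hypotheses (tX : is_topological_group mulX invX oneX) (hX : hausdorff_space X).
Hypotheses (cA : is_continuous_action mulG oneG act)
  (hom : acts_by_homomorphisms mulX act) (GC : G_connected mulG invG oneG act).

Definition slice_at_one (U : set (X * X)) : set X := [set x | U (oneX, x)].

Lemma slice_at_one_open U : open U -> open (slice_at_one U).
Proof.
move=> oU; apply: (@open_comp _ _ (pair oneX)) => // x _.
by apply: continuous_pair_at; [exact: cvg_cst | exact: cvg_id].
Qed.

Lemma slice_at_one_categorical U : open U -> Defs.invariant (diag_act act) U ->
  G_motion_planner act U -> G_categorical act (slice_at_one U).
Proof.
move=> oU invU [s [H [s_cont s_cU s_eq [cH H_eq H0 H1]]]].
have [grX cmX cinvX] := tX; have [act1 _ _] := cA.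
split=> [g x Ux|].
  by rewrite /slice_at_one /= -(act_one grX hom g); exact: (invU g (oneX, x)).
pose j (x : X) := (oneX, x).
(* With H = (H₁, H₂) run backwards, K(x, t) = H₂ H₁⁻¹ H₁(·, 0) s(t)⁻¹ starts
   at x because H ends at the inclusion, and ends at oneX because H starts at
   the endpoints of s. *)
pose K (q : X * I01) := mulX (mulX (mulX (H (j q.1, I01_rev q.2)).2
  (invX (H (j q.1, I01_rev q.2)).1)) (H (j q.1, I0)).1) (invX (s (j q.1) q.2)).
exists oneX, K; split.
- apply: continuous_in_subspaceT => -[x t] /set_mem[/= Ux _].
  have cj : continuous j.
    by move=> ?; apply: continuous_pair_at; [exact: cvg_cst | exact: cvg_id].
  have cH' : {in U `*` [set: I01], continuous H}.
    by rewrite -continuous_open_subspace //; exact: open_setXT.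
  have cs' : {in U, continuous s} by rewrite -continuous_open_subspace.
  have cHr r : continuous r ->
      {for (x, t), continuous (fun q : X * I01 => H (j q.1, r q.2))}.
    move=> cr; apply: (continuous_comp (f := fun q : X * I01 => (j q.1, r q.2))).
      apply: continuous_pair_at.
        by apply: (continuous_comp (f := fst)); [exact: cvg_fst | exact: cj].
      by apply: (continuous_comp (f := snd)); [exact: cvg_snd | exact: cr].
    by apply: cH'; rewrite inE.
  have cs : {for (x, t), continuous (fun q => (s (j q.1) : I01 -> X) q.2)}.
    apply: (compact_open_eval_continuous_at (f := s \o j)) I01_compact _ _ _.
        exact: uniform_regular.
      by apply: continuous_comp (cj x) _; apply: cs'; rewrite inE.
    exact: s_cont.
  apply: (continuous2_at cmX).
    apply: (continuous2_at cmX).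
      apply: (continuous2_at cmX).
        by apply: continuous_comp (cHr _ I01_rev_continuous) _; exact: cvg_snd.
      apply: (continuous_comp (g := invX)); last exact: cinvX.
      by apply: continuous_comp (cHr _ I01_rev_continuous) _; exact: cvg_fst.
    by apply: continuous_comp (cHr _ (@cst_continuous _ _ I0)) _; exact: cvg_fst.
  by apply: (continuous_comp (g := invX)); [exact: cs | exact: cinvX].
- move=> g x t Ux; rewrite /K /=.
  have -> : j (act g x) = diag_act act g (j x).
    by rewrite /diag_act /= (act_one grX hom).
  by rewrite !H_eq // s_eq // /diag_act /= !hom !(act_inv grX hom).
- move=> x Ux; rewrite /K /= I01_rev0 H1 // H0 //= (group_invg1 grX).
  by case: (grX) => _ _ -> _ _; rewrite (group_mulgK grX).
- move=> x Ux; exists oneG => //; rewrite act1 /K /= I01_rev1 H0 // /=.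
  by rewrite (group_mulgKV grX); case: grX => _ _ _ _ ->.
Qed.

Lemma orbit_compatible_path x0 : exists gam : I01 -> X,
  [/\ continuous gam, gam I0 = x0, gam I1 = oneX &
      forall g g', act g x0 = act g' x0 ->
        forall t, act g (gam t) = act g' (gam t)].
Proof.
have [grX _ _] := tX; have [act1 actM cact] := cA.
pose Stab := [set h : G | act h x0 = x0].
have Stab_closed : closed Stab.
  have ca : continuous (fun g => act g x0).
    by move=> g; apply: (continuous2_at cact); [exact: cvg_id | exact: cvg_cst].
  have -> : Stab = (fun g => act g x0) @^-1` [set x0] by [].
  move/continuous_closedP: ca; apply.
  exact: (accessible_closed_set1 (hausdorff_accessible hX)).
have Stab_subgroup : closed_subgroup mulG invG oneG Stab.
  split; [exact: Stab_closed | exact: act1 | move=> g h Sg Sh | move=> g Sg].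
    by rewrite /Stab /= actM Sh Sg.
  by rewrite /Stab /= -{1}Sg -actM; case: grG => _ _ _ -> _; exact: act1.
have [gam [cgam gam0 gam1 gam_fix]] :=
  GC Stab_subgroup (fun h Sh => Sh) (fun h _ => act_one grX hom h).
exists gam; split=> // g g' e t.
have Sg'g : Stab (mulG (invG g') g).
  by rewrite /Stab /= actM e -actM; case: grG => _ _ _ -> _; exact: act1.
by rewrite -{1}(group_mulKVg grG g' g) actM gam_fix.
Qed.

Lemma categorical_contraction V : open V -> G_categorical act V ->
  exists Q : X * I01 -> X,
   [/\ forall v t, V v -> {for (v, t), continuous Q},
       forall g v t, V v -> Q (act g v, t) = act g (Q (v, t)),
       forall v, V v -> Q (v, I0) = oneX &
       forall v, V v -> Q (v, I1) = v].
Proof.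
move=> oV [invV [x0 [H [cH H_eq H0 H1]]]].
have [grX cmX cinvX] := tX; have [act1 actM cact] := cA.
have [gam [cgam gam0 gam1 gam_compat]] := orbit_compatible_path x0.
have /choice[c c_orbit] : forall v, exists g, V v -> act g x0 = H (v, I1).
  move=> v; have [Vv|nVv] := pselect (V v); last by exists oneG => /nVv.
  by have [g _ eg] := H1 v Vv; exists g.
pose Q (p : X * I01) := mulX (mulX (H (p.1, I01_rev p.2)) (invX (H (p.1, I1))))
  (act (c p.1) (gam (I01_rev p.2))).
exists Q; split.
- move=> v t Vv.
  have cH' : {in V `*` [set: I01], continuous H}.
    by rewrite -continuous_open_subspace //; exact: open_setXT.
  have cH1 : {for v, continuous (fun y => H (y, I1))}.
    apply: (continuous_comp (f := fun y => (y, I1))); last by apply: cH'; rewrite inE.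
    by apply: continuous_pair_at; [exact: cvg_id | exact: cvg_cst].
  apply: (continuous2_at cmX).
    apply: (continuous2_at cmX).
      apply: (continuous_comp (f := fun q : X * I01 => (q.1, I01_rev q.2))).
        apply: continuous_pair_at; first exact: cvg_fst.
        apply: (continuous_comp (f := snd)); first exact: cvg_snd.
        exact: I01_rev_continuous.
      by apply: cH'; rewrite inE.
    apply: (continuous_comp (g := invX)); last exact: cinvX.
    apply: (continuous_comp (f := fst) (g := fun y => H (y, I1))); first exact: cvg_fst.
    exact: cH1.
  apply: (compact_descend_continuous_at (a := fun g => act g x0)
    (Phi := fun q : G * I01 => act q.1 (gam (I01_rev q.2)))
    (f := fun y => H (y, I1))) => //.
  + by move=> g; apply: (continuous2_at cact); [exact: cvg_id | exact: cvg_cst].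
  + move=> q; apply: (continuous2_at cact); first exact: cvg_fst.
    apply: (continuous_comp (f := fun q : G * I01 => I01_rev q.2)); last exact: cgam.
    apply: (continuous_comp (f := snd)); first exact: cvg_snd.
    exact: I01_rev_continuous.
  + have : nbhs v V by apply: open_nbhs_nbhs.
    by apply: filterS => y; exact: c_orbit.
  + by move=> g eg /=; apply: gam_compat; rewrite eg c_orbit.
- move=> g v t Vv; rewrite /Q /= !H_eq //.
  have -> : act (c (act g v)) (gam (I01_rev t)) =
            act g (act (c v) (gam (I01_rev t))).
    by rewrite -actM; apply: gam_compat; rewrite actM !c_orbit ?H_eq //; exact: invV.
  by rewrite !hom (act_inv grX hom).
- move=> v Vv; rewrite /Q /= I01_rev0 gam1 (act_one grX hom).
  by case: grX => _ _ mulg1 _ mulgV; rewrite mulgV mulg1.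
- by move=> v Vv; rewrite /Q /= I01_rev1 gam0 c_orbit // H0 // (group_mulgKV grX).
Qed.

Definition division_preimage (V : set X) : set (X * X) :=
  [set p | V (mulX (invX p.1) p.2)].

Lemma division_continuous : continuous (fun p : X * X => mulX (invX p.1) p.2).
Proof.
have [_ cmX cinvX] := tX; move=> p.
apply: (continuous2_at cmX); last exact: cvg_snd.
by apply: (continuous_comp (f := fst)); [exact: cvg_fst | exact: cinvX].
Qed.

Lemma division_preimage_open V : open V -> open (division_preimage V).
Proof. by move=> oV; apply: open_comp => // p _; exact: division_continuous. Qed.

Lemma division_preimage_invariant V :
  Defs.invariant act V -> Defs.invariant (diag_act act) (division_preimage V).
Proof.
have [grX _ _] := tX; move=> invV g p.
by rewrite /division_preimage /diag_act /= -(act_inv grX hom) -hom; exact: invV.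
Qed.

(* The planner is the constant path at x, deformed to the inclusion by
   (x, x Q(x⁻¹y, t)). *)
Lemma division_preimage_motion_planner V : open V -> G_categorical act V ->
  G_motion_planner act (division_preimage V).
Proof.
move=> oV catV; have [Q [cQ Q_eq Q0 Q1]] := categorical_contraction oV catV.
have [grX cmX _] := tX.
pose HB (q : (X * X) * I01) :=
  (q.1.1, mulX q.1.1 (Q (mulX (invX q.1.1) q.1.2, q.2))).
exists (fun p => cst p.1), HB; split=> //.
- by move=> u _; exact: cst_continuous.
- apply: continuous_subspaceT => p.
  apply: (continuous_comp (f := fst)); first exact: cvg_fst.
  exact: cst_path_continuous.
split.
- apply: continuous_in_subspaceT => -[p t] /set_mem[/= Vp _].
  have c11 : {for (p, t), continuous (fun q : (X * X) * I01 => q.1.1)}.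
    by apply: (continuous_comp (f := fst)); exact: cvg_fst.
  rewrite /HB; apply: (continuous_pair_at (f := fun q => q.1.1)) => //.
  apply: (continuous2_at cmX) => //.
  apply: (continuous_comp (f := fun q => (mulX (invX q.1.1) q.1.2, q.2)));
    last exact: cQ.
  apply: continuous_pair_at; last exact: cvg_snd.
  apply: (continuous_comp (f := fst) (g := fun p : X * X => mulX (invX p.1) p.2)).
    exact: cvg_fst.
  exact: division_continuous.
- move=> g [x y] t Vxy; rewrite /HB /diag_act /= -(act_inv grX hom) -hom Q_eq //.
  by rewrite hom.
- by move=> [x y] Vxy; rewrite /HB /= Q0 //; case: grX => _ _ ->.
- by move=> [x y] Vxy; rewrite /HB /= Q1 // (group_mulKVg grX).
Qed.

Lemma TC_cover_cat_cover k : TC_cover act k -> cat_cover act k.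
Proof.
case=> U [oU invU mpU covU]; exists (fun i => slice_at_one (U i)); split.
- by move=> i; exact: slice_at_one_open.
- by move=> i; exact: slice_at_one_categorical.
- apply/seteqP; split=> // x _.
  have : [set: X * X] (oneX, x) by [].
  by rewrite -covU => -[i _ Ui]; exists i.
Qed.

Lemma cat_cover_TC_cover k : cat_cover act k -> TC_cover act k.
Proof.
case=> V [oV catV covV]; exists (fun i => division_preimage (V i)); split.
- by move=> i; exact: division_preimage_open.
- by move=> i; apply: division_preimage_invariant; case: (catV i).
- by move=> i; exact: division_preimage_motion_planner.
- apply/seteqP; split=> // p _.
  have : [set: X] (mulX (invX p.1) p.2) by [].
  by rewrite -covV => -[i _ Vi]; exists i.
Qed.

End equivariant_category.

Unset Implicit Arguments.
Local Close Scope ring_scope.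
Local Close Scope classical_set_scope.

(* Only the group structure of G enters, not its topology beyond compactness. *)
Theorem proposition5p12 (G X : topologicalType)
  (mulG : G -> G -> G) (invG : G -> G) (oneG : G)
  (mulX : X -> X -> X) (invX : X -> X) (oneX : X)
  (act : G -> X -> X) :
  is_topological_group mulG invG oneG ->
  compact [set: G] -> hausdorff_space G ->
  is_topological_group mulX invX oneX -> hausdorff_space X ->
  is_continuous_action mulG oneG act ->
  acts_by_homomorphisms mulX act ->
  G_connected mulG invG oneG act ->
  TCG act = catG act.
Proof.
move=> [grG _ _] cG _ tX hX cA hom GC.
rewrite /TCG /catG; congr least_nat; apply: funext => k; apply: propext; split.
- exact: TC_cover_cat_cover tX cA hom k.
- exact: cat_cover_TC_cover grG cG tX hX cA hom GC k.
Qed.
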